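(* Let $N\ge1$, let $\phi:H_0(S_N)\to M_N$ be the quotient morphism sending $\pi_i\mapsto \pi_i$, where $M_N$ is the quotient of $H_0(S_N)$ by the relations $\pi_i\pi_{i+1}\pi_i=\pi_i\pi_{i+1}$ ($1\le i\le N-2$), let $\Psi$ be the automorphism of $H_0(S_N)$ with $\Psi(\pi_i)=\pi_{N-i}$, and define $\omega(x)=(\phi(x),\phi(\Psi(x)))$ for $x\in H_0(S_N)$. Then every nonempty fiber $\{w\in S_N:\ \omega(\pi_w)=c\}$ of $\omega$ contains a unique $[4321]$-avoiding permutation.
   Context: $S_N$ is generated by simple transpositions $s_1,\dots,s_{N-1}$; permutations are in one-line notation and composed as functions. $H_0(S_N)$ is generated by $\pi_1,\dots,\pi_{N-1}$ with relations $\pi_i^2=\pi_i$, $\pi_i\pi_j=\pi_j\pi_i$ for $|i-j|\ge2$, $\pi_i\pi_{i+1}\pi_i=\pi_{i+1}\pi_i\pi_{i+1}$; $\pi_w:=\pi_{i_1}\cdots\pi_{i_k}$ for any reduced word $w=s_{i_1}\cdots s_{i_k}$, a bijection $S_N\to H_0(S_N)$. A permutation avoids $[4321]$ if its one-line notation has no decreasing subsequence of length $4$. ($M_N$ is isomorphic to the monoid $\operatorname{NDPF}_N$ of order-preserving regressive maps of $\{1,\dots,N\}$.) *)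

From mathcomp Require Import all_boot all_fingroup.
Set Implicit Arguments. Unset Strict Implicit. Unset Printing Implicit Defensive.

(* Action of the simple transposition s_i (1 <= i <= N-1) on positions,
   encoded 0-based: s_i swaps the values i-1 and i (i.e. 1-based i and i+1). *)
Definition sw (i x : nat) : nat :=
  if x == i.-1 then i else if x == i then i.-1 else x.

Fixpoint word_fun (w : seq nat) (x : nat) : nat :=
  if w is i :: r then sw i (word_fun r x) else x.

Definition valid_word (N : nat) (w : seq nat) : bool :=
  all (fun i => (0 < i) && (i < N)) w.

(* Coxeter length = number of inversions of the one-line notation. *)
Definition ninv (N : nat) (p : 'S_N) : nat :=
  #|[set ab : 'I_N * 'I_N | (ab.1 < ab.2) && (p ab.2 < p ab.1)]|.

Definition reduced_word (N : nat) (rw : seq nat) (p : 'S_N) : Prop :=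
  [/\ valid_word N rw,
      forall x : 'I_N, val (p x) = word_fun rw (val x)
    & size rw = ninv p].

Inductive MN_basic (N : nat) : seq nat -> seq nat -> Prop :=
| MN_idem i : 0 < i -> i < N -> MN_basic N [:: i; i] [:: i]
| MN_comm i j : 0 < i -> i < N -> 0 < j -> j < N -> (i + 2 <= j) || (j + 2 <= i) ->
    MN_basic N [:: i; j] [:: j; i]
| MN_braid i : 0 < i -> i.+1 < N -> MN_basic N [:: i; i.+1; i] [:: i.+1; i; i.+1]
| MN_extra i : 0 < i -> i.+1 < N -> MN_basic N [:: i; i.+1; i] [:: i; i.+1].

Inductive MN_eq (N : nat) : seq nat -> seq nat -> Prop :=
| MN_step u v l r : MN_basic N l r -> MN_eq N (u ++ l ++ v) (u ++ r ++ v)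
| MN_refl u : MN_eq N u u
| MN_sym u v : MN_eq N u v -> MN_eq N v u
| MN_trans u v t : MN_eq N u v -> MN_eq N v t -> MN_eq N u t.

Definition Psi_word (N : nat) (w : seq nat) : seq nat := map (fun i => N - i) w.

(* omega(pi_p) = omega(pi_q): phi(pi_p) = phi(pi_q) and phi(Psi pi_p) = phi(Psi pi_q),
   where pi_p is represented by any reduced word of p. *)
Definition omega_eq (N : nat) (p q : 'S_N) : Prop :=
  forall rp rq, reduced_word rp p -> reduced_word rq q ->
    MN_eq N rp rq /\ MN_eq N (Psi_word N rp) (Psi_word N rq).

Definition avoids4321 (N : nat) (p : 'S_N) : bool :=
  [forall a : 'I_N, forall b : 'I_N, forall c : 'I_N, forall d : 'I_N,
     ~~ [&& a < b, b < c, c < d, p b < p a, p c < p b & p d < p c]].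

From mathcomp Require Import all_boot all_fingroup zify.
Set Implicit Arguments. Unset Strict Implicit. Unset Printing Implicit Defensive.

(* In the NDPF model, where pi_i sends the value i to i-1, M_N acts faithfully
   on {0, ..., N-1}: every word is equivalent to a normal form determined by its
   action. A reduced word of p acts as x |-> min_{k >= x} p(k), and Psi amounts
   to conjugating p by the longest element, so omega(pi_p) records the
   right-to-left minima and the left-to-right maxima of p together with their
   values. If p contains 4321 at positions a < b < c < d, exchanging p(b) and
   p(c) preserves these data and increases sum_k k p(k); hence a permutation of
   maximal weight in a fiber avoids 4321. Conversely, a 4321-avoiding
   permutation is increasing on the positions that are neither right-to-left
   minima nor left-to-right maxima, so these data determine it. *)

Section NDPFModel.

Variable N : nat.

Lemma MN_eq_cat u v x y : MN_eq N u v -> MN_eq N (x ++ u ++ y) (x ++ v ++ y).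
Proof.
elim=> [u' v' l r H|u'|u' v' _ IH|u' v' t _ IH1 _ IH2].
- have -> : x ++ (u' ++ l ++ v') ++ y = (x ++ u') ++ l ++ (v' ++ y) by rewrite !catA.
  have -> : x ++ (u' ++ r ++ v') ++ y = (x ++ u') ++ r ++ (v' ++ y) by rewrite !catA.
  exact: MN_step.
- exact: MN_refl.
- exact: MN_sym.
- exact: MN_trans IH2.
Qed.

Lemma MN_eq_catl u v x : MN_eq N u v -> MN_eq N (x ++ u) (x ++ v).
Proof. by move=> H; have := MN_eq_cat x [::] H; rewrite !cats0. Qed.

Lemma MN_eq_catr u v y : MN_eq N u v -> MN_eq N (u ++ y) (v ++ y).
Proof. exact: MN_eq_cat [::] y. Qed.

Lemma MN_basic_eq l r : MN_basic N l r -> MN_eq N l r.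
Proof. by move=> H; have := MN_step [::] [::] H; rewrite /= !cats0. Qed.

Lemma MN_basic_catr l r y : MN_basic N l r -> MN_eq N (l ++ y) (r ++ y).
Proof. exact: MN_step [::] y l r. Qed.

Definition lower (i y : nat) : nat := if y == i then i.-1 else y.
Definition ndpf (w : seq nat) (x : nat) : nat := foldr lower x w.

Lemma ndpf_cat u v x : ndpf (u ++ v) x = ndpf u (ndpf v x).
Proof. by rewrite /ndpf foldr_cat. Qed.

Lemma ndpf_MN_basic l r : MN_basic N l r -> ndpf l =1 ndpf r.
Proof.
by case=> [i _ _|i j _ _ _ _ H|i _ _|i _ _] x; rewrite /ndpf /= /lower; repeat case: eqP; lia.
Qed.

Lemma ndpf_MN_eq u v : MN_eq N u v -> ndpf u =1 ndpf v.
Proof.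
elim=> [u' v' l r H|u'|u' v' _ IH|u' v' t _ IH1 _ IH2] x //.
- by rewrite !ndpf_cat (ndpf_MN_basic H).
- by rewrite IH1.
Qed.

Lemma ndpf_le w x : ndpf w x <= x.
Proof. by elim: w => //= i w IH; rewrite /lower; case: eqP; lia. Qed.

Lemma ndpf_mono w : {homo ndpf w : x y / x <= y}.
Proof.
elim: w => //= i w IH x y /IH; rewrite /ndpf /= -/(ndpf w x) -/(ndpf w y) /lower.
by move: (ndpf w x) (ndpf w y) => a b hab; repeat case: eqP; lia.
Qed.

(* [chain a x] = pi_{a+1} ... pi_x sends every value of (a, x] to a. *)
Definition chain (a x : nat) : seq nat := iota a.+1 (x - a).

Definition canon_word (f : nat -> nat) : seq nat :=
  flatten [seq chain (f x) x | x <- rev (iota 0 N)].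

Lemma MN_eq_commute j t : 0 < j < N ->
  all (fun k => (0 < k < N) && ((k + 2 <= j) || (j + 2 <= k))) t ->
  MN_eq N (t ++ [:: j]) (j :: t).
Proof.
move=> hj; elim: t => [|k t IH] /=; first by move=> _; exact: MN_refl.
case/andP=> /andP[hk hkj] /IH/(MN_eq_catl [:: k])/MN_trans; apply.
by apply: (MN_basic_catr _ (MN_comm _ _ _ _ hkj)); lia.
Qed.

Lemma chain_absorbl a n j : a < j <= a + n -> a + n < N ->
  MN_eq N (j :: iota a.+1 n) (iota a.+1 n).
Proof.
elim: n a => [|n IH] a hj hN; first lia.
rewrite [iota _ _]/=.
case: (ltngtP j a.+2) => hj2.
- have -> : j = a.+1 by lia.
  by apply: (MN_basic_catr _ (@MN_idem N a.+1 _ _)); lia.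
- apply: MN_trans (_ : MN_eq N (a.+1 :: j :: iota a.+2 n) _).
    by apply: (MN_basic_catr _ (@MN_comm N j a.+1 _ _ _ _ _)); lia.
  by apply: (MN_eq_catl [:: a.+1]); apply: IH; lia.
- subst j; case: n IH hj hN => [|n] IH hj hN; first lia.
  rewrite [iota _ _]/=.
  apply: MN_trans (_ : MN_eq N ([:: a.+1; a.+2; a.+1] ++ iota a.+3 n) _).
    by apply/MN_sym; apply: (MN_basic_catr _ (@MN_braid N a.+1 _ _)); lia.
  by apply: (MN_basic_catr _ (@MN_extra N a.+1 _ _)); lia.
Qed.

Lemma chain_absorbr a n j : a < j <= a + n -> a + n < N ->
  MN_eq N (iota a.+1 n ++ [:: j]) (iota a.+1 n).
Proof.
elim: n a => [|n IH] a hj hN; first lia.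
rewrite [iota _ _]/=.
case: (ltngtP j a.+1) => hj2; first lia.
- by apply: (MN_eq_catl [:: a.+1]); apply: IH; lia.
- subst j; case: n IH hj hN => [|n] IH hj hN.
    by apply: MN_basic_eq; apply: (@MN_idem N a.+1); lia.
  rewrite [iota _ _]/=.
  have comm : MN_eq N (iota a.+3 n ++ [:: a.+1]) (a.+1 :: iota a.+3 n).
    by apply: MN_eq_commute; [lia | apply/allP => k; rewrite mem_iota; lia].
  apply: MN_trans (MN_eq_catl [:: a.+1; a.+2] comm) _.
  by apply: (MN_basic_catr _ (@MN_extra N a.+1 _ _)); lia.
Qed.

Lemma chain_absorbl_seq a n t : a + n < N -> all (fun j => a < j <= a + n) t ->
  MN_eq N (t ++ iota a.+1 n) (iota a.+1 n).
Proof.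
move=> hN; elim: t => [|j t IH] /=; first by move=> _; exact: MN_refl.
case/andP=> hj /IH/(MN_eq_catl [:: j])/MN_trans; apply.
exact: chain_absorbl.
Qed.

Lemma chain_absorbr_seq a n t : a + n < N -> all (fun j => a < j <= a + n) t ->
  MN_eq N (iota a.+1 n ++ t) (iota a.+1 n).
Proof.
move=> hN; elim: t => [|j t IH] /=; first by rewrite cats0 => _; exact: MN_refl.
case/andP=> hj ht; rewrite -cat1s catA.
exact: MN_trans (MN_eq_catr t (chain_absorbr hj hN)) (IH ht).
Qed.

Lemma chain_merge a b i : a <= b <= i -> a <= i.-1 -> 0 < i < N ->
  MN_eq N (chain b i ++ chain a i.-1 ++ [:: i]) (chain a i ++ chain a i.-1).
Proof.
move=> hab hai hi.
have -> : chain a i.-1 ++ [:: i] = chain a i.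
  rewrite /chain; have -> : i - a = (i.-1 - a) + 1 by lia.
  by rewrite iotaD /=; congr (_ ++ [:: _]); lia.
apply: MN_trans (_ : MN_eq N (chain a i) _).
  by apply: chain_absorbl_seq; [lia | apply/allP => k; rewrite mem_iota; lia].
by apply/MN_sym/chain_absorbr_seq; [lia | apply/allP => k; rewrite mem_iota; lia].
Qed.

Lemma rev_iota_split i : 0 < i < N ->
  rev (iota 0 N) = rev (iota i.+1 (N - i.+1)) ++ [:: i; i.-1] ++ rev (iota 0 i.-1).
Proof.
move=> hi; have -> : N = i.-1 + (2 + (N - i.+1)) by lia.
rewrite iotaD iotaD /= !rev_cat /= !rev_cons -!cats1 -!catA add0n.
by congr (rev (iota _ _) ++ _ :: _ :: _); lia.
Qed.

Lemma eq_canon_word f h : (forall x, x < N -> f x = h x) -> canon_word f = canon_word h.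
Proof.
move=> e; rewrite /canon_word; congr flatten; apply/eq_in_map => x.
by rewrite mem_rev mem_iota => hx; rewrite e //; lia.
Qed.

Lemma canon_word_id : canon_word id = [::].
Proof. by rewrite /canon_word; elim: (rev _) => //= x s ->; rewrite /chain subnn. Qed.

(* Only the chains at x = i and x = i-1 are affected. *)
Lemma canon_word_rcons f i :
  {homo f : x y / x <= y} -> (forall x, f x <= x) -> 0 < i < N ->
  MN_eq N (canon_word f ++ [:: i]) (canon_word (f \o lower i)).
Proof.
move=> fmono freg hi.
rewrite /canon_word (rev_iota_split hi) !map_cat !flatten_cat /= !cats0.
have lower_out x : x != i -> lower i x = x by rewrite /lower => /negbTE ->.
have chains_out s : all (fun x => x != i) s ->
    [seq chain (f (lower i x)) x | x <- s] = [seq chain (f x) x | x <- s].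
  by move=> /allP hs; apply/eq_in_map => x /hs/lower_out ->.
rewrite !chains_out; try by apply/allP => x; rewrite mem_rev mem_iota; lia.
rewrite [lower i i]/lower eqxx (lower_out i.-1); last by apply/eqP; lia.
set H := flatten _; set T := flatten _.
rewrite -!catA; apply: MN_eq_catl.
have commT : MN_eq N (T ++ [:: i]) (i :: T).
  apply: MN_eq_commute => //; apply/allP => k.
  case/flattenP => s /mapP [x]; rewrite mem_rev mem_iota => hx -> {s}.
  by rewrite /chain mem_iota => hk; have := freg x; lia.
rewrite catA; apply: MN_trans (MN_eq_catl _ commT) _.
rewrite -catA -cat1s !catA; apply: MN_eq_catr.
have := fmono i.-1 i (leq_pred i); have := freg i; have := freg i.-1.
by move=> *; rewrite -catA; apply: chain_merge; lia.
Qed.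

Lemma MN_eq_canon_word w : valid_word N w -> MN_eq N w (canon_word (ndpf w)).
Proof.
elim/last_ind: w => [|w i IH].
  by rewrite (@eq_canon_word _ id) // canon_word_id => _; exact: MN_refl.
rewrite /valid_word all_rcons => /andP [hi hw].
rewrite -cats1; apply: MN_trans (MN_eq_catr _ (IH hw)) _.
rewrite (@eq_canon_word (ndpf (w ++ [:: i])) (ndpf w \o lower i)) => [|x _];
  last by rewrite ndpf_cat.
by apply: canon_word_rcons => //; [exact: ndpf_mono | exact: ndpf_le].
Qed.

Lemma MN_eq_ndpf u v : valid_word N u -> valid_word N v ->
  (forall x, x < N -> ndpf u x = ndpf v x) -> MN_eq N u v.
Proof.
move=> hu hv e; apply: MN_trans (MN_eq_canon_word hu) _.
by rewrite (eq_canon_word e); apply/MN_sym/MN_eq_canon_word.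
Qed.

End NDPFModel.

Section NatPermutations.

Variable N : nat.

Definition inverses_on (f h : nat -> nat) :=
  [/\ forall x, x < N -> f x < N, forall x, x < N -> h x < N,
      forall x, x < N -> h (f x) = x & forall x, x < N -> f (h x) = x].

Lemma inverses_on_inj f h : inverses_on f h ->
  forall a b, a < N -> b < N -> f a = f b -> a = b.
Proof. by case=> _ _ hf _ a b ha hb e; rewrite -(hf a ha) e hf. Qed.

Definition inversions (f : nat -> nat) : nat :=
  #|[set ab : 'I_N * 'I_N | (ab.1 < ab.2) && (f ab.2 < f ab.1)]|.

Lemma eq_inversions f h : (forall x, x < N -> f x = h x) -> inversions f = inversions h.
Proof. by move=> e; apply: eq_card => -[a b]; rewrite !inE /= !e. Qed.

Lemma inversions_id : inversions id = 0.
Proof. by apply/eqP; rewrite cards_eq0; apply/eqP/setP => -[a b]; rewrite !inE /=; lia. Qed.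

Lemma inversions_pair (f h : nat -> nat) (pr : 'I_N * 'I_N) :
  (forall ab : 'I_N * 'I_N, ab != pr ->
     ((ab.1 < ab.2) && (f ab.2 < f ab.1)) = ((ab.1 < ab.2) && (h ab.2 < h ab.1))) ->
  inversions f + ((pr.1 < pr.2) && (h pr.2 < h pr.1)) =
  inversions h + ((pr.1 < pr.2) && (f pr.2 < f pr.1)).
Proof.
move=> same; rewrite /inversions (cardsD1 pr [set _ | _ && (f _ < f _)]).
rewrite (cardsD1 pr [set _ | _ && (h _ < h _)]) !inE.
have -> : [set ab : 'I_N * 'I_N | (ab.1 < ab.2) && (f ab.2 < f ab.1)] :\ pr =
          [set ab : 'I_N * 'I_N | (ab.1 < ab.2) && (h ab.2 < h ab.1)] :\ pr.
  by apply/setP => ab; rewrite !inE; case: eqP => //= /eqP /same.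
by rewrite [LHS]addnAC [RHS]addnAC; congr (_ + _); exact: addnC.
Qed.

Lemma sw_lt i x : 0 < i < N -> (sw i x < N) = (x < N).
Proof. by move=> hi; rewrite /sw; repeat case: eqP; move=> *; apply/idP/idP; lia. Qed.

Lemma swK i : 0 < i -> involutive (sw i).
Proof. by move=> hi x; rewrite /sw; repeat case: eqP; lia. Qed.

Lemma sw_pred i : sw i i.-1 = i.
Proof. by rewrite /sw eqxx. Qed.

Lemma sw_self i : 0 < i -> sw i i = i.-1.
Proof. by move=> hi; rewrite /sw ifN ?eqxx //; lia. Qed.

Lemma inversions_sw f h i : inverses_on f h -> 0 < i < N ->
  inversions (sw i \o f) + (h i < h i.-1) = inversions f + (h i.-1 < h i).
Proof.
move=> fh hi; have [fN hN hf fhK] := fh.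
set p := h i.-1; set q := h i.
have [fp fq] : f p = i.-1 /\ f q = i by split; apply: fhK; lia.
have pN : p < N by apply: hN; lia.
have qN : q < N by apply: hN; lia.
have pq : p != q by apply/eqP => e; move: fq; rewrite -e fp; lia.
have loN : minn p q < N by lia.
have hiN : maxn p q < N by lia.
pose pr := (Ordinal loN, Ordinal hiN).
have /= := @inversions_pair (sw i \o f) f pr.
have -> : (minn p q < maxn p q) = true by lia.
have [-> ->] : (f (maxn p q) < f (minn p q)) = (q < p) /\
                (sw i (f (maxn p q)) < sw i (f (minn p q))) = (p < q).
  by case: (ltngtP p q) pq => // _ _; rewrite fp fq /sw; split; repeat case: eqP; lia.
apply=> -[a b] /=; rewrite xpair_eqE -!val_eqE /= => ab_pr.
case: ltnP => //= ab; have aN := ltn_ord a; have bN := ltn_ord b.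
have not_swapped : ~ (f a = i.-1 /\ f b = i) /\ ~ (f a = i /\ f b = i.-1).
  by split=> -[ea eb]; move: ab_pr ab; rewrite -[val a]hf // -[val b]hf // ea eb -/p -/q; lia.
have fab : f a != f b by apply/eqP => /(inverses_on_inj fh aN bN); lia.
by rewrite /sw; move: not_swapped fab; repeat case: eqP; lia.
Qed.

Lemma word_fun_cat u v x : word_fun (u ++ v) x = word_fun u (word_fun v x).
Proof. by elim: u => //= i u ->. Qed.

Lemma word_fun_lt w x : valid_word N w -> x < N -> word_fun w x < N.
Proof. by elim: w => //= i w IH /andP [hi hw] hx; rewrite sw_lt // IH. Qed.

Lemma word_funK w : valid_word N w -> cancel (word_fun w) (word_fun (rev w)).
Proof.
elim: w => //= i w IH /andP [/andP [hi0 _] hw] x.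
by rewrite rev_cons -cats1 word_fun_cat /= swK // IH.
Qed.

Lemma word_inverses w : valid_word N w -> inverses_on (word_fun w) (word_fun (rev w)).
Proof.
move=> hw; have hrw : valid_word N (rev w) by rewrite /valid_word all_rev.
split=> x hx; [exact: word_fun_lt | exact: word_fun_lt | exact: word_funK |].
by have := word_funK hrw x; rewrite revK.
Qed.

Lemma inversions_word_le w : valid_word N w -> inversions (word_fun w) <= size w.
Proof.
elim: w => [|i w IH] /=; first by rewrite inversions_id.
move=> /andP [hi hw]; suff : inversions (sw i \o word_fun w) <= (size w).+1 by [].
by have := inversions_sw (word_inverses hw) hi; have := IH hw; lia.
Qed.

Fixpoint min_from (f : nat -> nat) (x n : nat) : nat :=
  if n is n'.+1 then minn (f x) (min_from f x.+1 n') else f x.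

Lemma min_from_le f n x k : x <= k <= x + n -> min_from f x n <= f k.
Proof.
elim: n x => [|n IH] x hk /=; first by have -> : k = x by lia.
by case: (ltngtP x k) => [xk||<-]; [have := IH x.+1 ltac:(lia) | |]; lia.
Qed.

Lemma min_from_attained f n x : exists2 k, x <= k <= x + n & min_from f x n = f k.
Proof.
elim: n x => [|n IH] x /=; first by exists x => //; lia.
have [k hk e] := IH x.+1; case: (leqP (f x) (min_from f x.+1 n)) => h.
- by exists x; lia.
- by exists k; lia.
Qed.

Definition sufmin (f : nat -> nat) (x : nat) : nat := min_from f x (N - x.+1).

Lemma sufmin_le f x k : x <= k < N -> sufmin f x <= f k.
Proof. by move=> h; apply: min_from_le; lia. Qed.

Lemma sufmin_attained f x : x < N -> exists2 k, x <= k < N & sufmin f x = f k.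
Proof. by move=> h; have [k hk e] := min_from_attained f (N - x.+1) x; exists k => //; lia. Qed.

Lemma sufmin_char f x k0 : x <= k0 < N ->
  (forall k, x <= k < N -> f k0 <= f k) -> sufmin f x = f k0.
Proof.
move=> hk0 low; apply/eqP; rewrite eqn_leq sufmin_le //=.
by have [|k hk ->] := @sufmin_attained f x; [lia | apply: low].
Qed.

Lemma eq_sufmin f h x : (forall k, k < N -> f k = h k) -> x < N -> sufmin f x = sufmin h x.
Proof.
move=> e hx; have [k hk hmin] := sufmin_attained h hx.
rewrite hmin -e; last lia.
apply: sufmin_char => // k' hk'.
by rewrite !e -?hmin ?sufmin_le //; lia.
Qed.

End NatPermutations.

Section ReducedWords.

Variable N : nat.

Lemma lower_le_sw i m y : 0 < i -> m <= y -> lower i m <= sw i y.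
Proof. by move=> hi my; rewrite /lower /sw; repeat case: eqP; lia. Qed.

Lemma sufmin_sw f h i x : inverses_on N f h -> 0 < i < N -> h i.-1 < h i -> x < N ->
  sufmin N (sw i \o f) x = lower i (sufmin N f x).
Proof.
move=> [fN hN hf fhK] hi asc hx.
have [k0 hk0 min0] := sufmin_attained f hx.
have low k : x <= k < N -> lower i (sufmin N f x) <= sw i (f k).
  by move=> hk; apply: lower_le_sw; [lia | exact: sufmin_le].
case: (eqVneq (sufmin N f x) i.-1) => [m_pred | m_npred].
- have k0_pred : k0 = h i.-1 by rewrite -[k0]hf -?min0 ?m_pred //; lia.
  have e : lower i (sufmin N f x) = sw i (f (h i)).
    by rewrite m_pred fhK /lower /sw; repeat case: eqP; lia.
  rewrite e; apply: sufmin_char => [|k /low]; rewrite ?e //.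
  by have := hN i; lia.
- have e : lower i (sufmin N f x) = sw i (f k0).
    by move: m_npred; rewrite min0 /lower /sw; repeat case: eqP; lia.
  by rewrite e; apply: sufmin_char => // k /low; rewrite e.
Qed.

Lemma ndpf_reduced w : valid_word N w -> size w = inversions N (word_fun w) ->
  forall x, x < N -> ndpf w x = sufmin N (word_fun w) x.
Proof.
elim: w => [|i w IH] /=.
  by move=> _ _ x hx; apply/esym; apply: (sufmin_char (k0 := x)) => [|k]; lia.
move=> /andP [hi hw] hsize x hx.
have fh := word_inverses hw.
have [asc w_reduced] : word_fun (rev w) i.-1 < word_fun (rev w) i /\
                       size w = inversions N (word_fun w).
  have := inversions_sw fh hi; have := inversions_word_le hw.
  by rewrite -[inversions N (sw i \o _)]/(inversions N (word_fun (i :: w))) -hsize /=; lia.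
by rewrite -[sufmin N _ x]/(sufmin N (sw i \o word_fun w) x) (sufmin_sw fh) // IH.
Qed.

Lemma descent_step f h i : inverses_on N f h -> 0 < i < N -> h i < h i.-1 ->
  inverses_on N (sw i \o f) (h \o sw i) /\ inversions N f = (inversions N (sw i \o f)).+1.
Proof.
move=> fh hi desc; have [fN hN hf fhK] := fh.
have fh' : inverses_on N (sw i \o f) (h \o sw i).
  have i0 : 0 < i by lia.
  split=> x hx /=.
  - by rewrite sw_lt // fN.
  - by rewrite hN // sw_lt.
  - by rewrite swK // hf.
  - by rewrite fhK ?swK // sw_lt.
split=> //; have := inversions_sw fh' hi.
rewrite (@eq_inversions N (sw i \o (sw i \o f)) f) => [|x _]; last by rewrite /= swK //; lia.
by rewrite /= sw_self ?sw_pred; lia.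
Qed.

Lemma descent_or_id f h : inverses_on N f h ->
  (exists2 i, 0 < i < N & h i < h i.-1) \/ (forall x, x < N -> f x = x).
Proof.
move=> fh; have [fN hN hf fhK] := fh.
case: (boolP [exists i : 'I_N, (0 < i) && (h i < h i.-1)]) => [/existsP [i] /andP [i0 desc]|].
  by left; exists i; rewrite ?ltn_ord ?i0.
move/existsPn => asc; right.
have h_asc i : 0 < i < N -> h i.-1 < h i.
  case/andP=> i0 iN; have := asc (Ordinal iN); rewrite /= i0 -leqNgt.
  have : h i.-1 != h i by apply/eqP => /(f_equal f); rewrite !fhK; lia.
  lia.
have h_up y : y < N -> y <= h y.
  by elim: y => [//|y IH] hy; have := h_asc y.+1 ltac:(lia); have := IH ltac:(lia) => /=; lia.
have h_down k : k < N -> h (N.-1 - k) <= N.-1 - k.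
  elim: k => [|k IH] hk; first by rewrite subn0; have := hN N.-1 ltac:(lia); lia.
  have := h_asc (N.-1 - k) ltac:(lia); have := IH ltac:(lia).
  by rewrite (_ : (N.-1 - k).-1 = N.-1 - k.+1); lia.
move=> x hx; have hxx : h x = x.
  have := h_up x hx; have := h_down (N.-1 - x) ltac:(lia).
  by rewrite (_ : N.-1 - (N.-1 - x) = x); lia.
by rewrite -{1}hxx fhK.
Qed.

Lemma exists_word n f h : inverses_on N f h -> inversions N f = n ->
  exists w, [/\ valid_word N w, size w = n & forall x, x < N -> word_fun w x = f x].
Proof.
elim: n f h => [|n IH] f h fh hn; case: (descent_or_id fh) => [[i hi desc]|fid].
- by have [_] := descent_step fh hi desc; lia.
- by exists [::]; split=> // x /fid.
- have [fh' e] := descent_step fh hi desc.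
  have [w [hw hs hwf]] := IH _ _ fh' ltac:(lia).
  exists (i :: w); split => /=; [by rewrite hw andbT | by rewrite hs |].
  by move=> x hx; rewrite hwf //= swK //; lia.
- by move: hn; rewrite (eq_inversions fid) inversions_id.
Qed.

(* Conjugation by the longest element [x |-> N-1-x]; it corresponds to Psi. *)
Definition rev_conj (f : nat -> nat) (x : nat) : nat := N.-1 - f (N.-1 - x).

Lemma rev_conj_rev f k : k < N -> rev_conj f (N.-1 - k) = N.-1 - f k.
Proof. by move=> hk; rewrite /rev_conj (_ : N.-1 - (N.-1 - k) = k) //; lia. Qed.

Lemma sw_rev i y : 0 < i < N -> y < N -> sw (N - i) (N.-1 - y) = N.-1 - sw i y.
Proof. by move=> hi hy; rewrite /sw; repeat case: eqP; lia. Qed.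

Lemma valid_Psi_word w : valid_word N w -> valid_word N (Psi_word N w).
Proof. by rewrite /valid_word /Psi_word all_map => /allP hw; apply/allP => i /hw /=; lia. Qed.

Lemma word_fun_Psi w x : valid_word N w -> x < N ->
  word_fun (Psi_word N w) x = rev_conj (word_fun w) x.
Proof.
rewrite /rev_conj; elim: w => /= [_ hx|i w IH /andP [hi hw] hx]; first lia.
by rewrite IH // sw_rev // word_fun_lt //; lia.
Qed.

Lemma inversions_rev_conj f : (forall x, x < N -> f x < N) ->
  inversions N (rev_conj f) = inversions N f.
Proof.
move=> fN; pose flip (ab : 'I_N * 'I_N) := (rev_ord ab.2, rev_ord ab.1).
have flipK : involutive flip by move=> [a b]; rewrite /flip /= !rev_ordK.
rewrite /inversions -(card_preimset _ (inv_inj flipK)); apply: eq_card => -[a b].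
rewrite !inE /= /rev_conj; have aN := ltn_ord a; have bN := ltn_ord b.
have -> : N.-1 - (N - b.+1) = b by lia.
have -> : N.-1 - (N - a.+1) = a by lia.
by have := fN a aN; have := fN b bN; lia.
Qed.

End ReducedWords.

Section Omega.

Variable N : nat.

Definition perm_nat (p : 'S_N) (x : nat) : nat :=
  if insub x is Some i then val (p i) else x.

Lemma perm_nat_ord p (i : 'I_N) : perm_nat p i = p i.
Proof. by rewrite /perm_nat valK. Qed.

Lemma perm_natE p x (hx : x < N) : perm_nat p x = p (Ordinal hx).
Proof. by rewrite -perm_nat_ord. Qed.

Lemma perm_nat_inverses p : inverses_on N (perm_nat p) (perm_nat p^-1).
Proof.
split=> x hx; rewrite !(perm_natE _ hx) ?ltn_ord //.
- by rewrite perm_nat_ord permK.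
- by rewrite perm_nat_ord permKV.
Qed.

Lemma ninv_perm_nat p : ninv p = inversions N (perm_nat p).
Proof. by apply: eq_card => -[a b]; rewrite !inE /= !perm_nat_ord. Qed.

Lemma reduced_word_fun w p : reduced_word w p -> forall x, x < N -> word_fun w x = perm_nat p x.
Proof. by case=> _ hw _ x hx; rewrite (perm_natE _ hx) hw. Qed.

Lemma exists_reduced_word (p : 'S_N) : exists w, reduced_word w p.
Proof.
have [w [hw hs hwp]] := exists_word (perm_nat_inverses p) (erefl _).
exists w; split=> //; last by rewrite ninv_perm_nat.
by move=> x; rewrite hwp ?perm_nat_ord ?ltn_ord.
Qed.

Lemma ndpf_reduced_word w p x : reduced_word w p -> x < N ->
  ndpf w x = sufmin N (perm_nat p) x.
Proof.
move=> hwp hx; have [hw _ hs] := hwp; have e := reduced_word_fun hwp.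
rewrite (ndpf_reduced hw) ?(eq_sufmin e) // hs ninv_perm_nat.
by apply: eq_inversions => k /e.
Qed.

Lemma ndpf_Psi_reduced_word w p x : reduced_word w p -> x < N ->
  ndpf (Psi_word N w) x = sufmin N (rev_conj N (perm_nat p)) x.
Proof.
move=> hwp hx; have [hw _ hs] := hwp; have e := reduced_word_fun hwp.
have e_Psi k : k < N -> word_fun (Psi_word N w) k = rev_conj N (perm_nat p) k.
  by move=> hk; rewrite word_fun_Psi // /rev_conj e //; lia.
rewrite (ndpf_reduced (valid_Psi_word hw)) ?(eq_sufmin e_Psi) // size_map hs ninv_perm_nat.
rewrite (eq_inversions e_Psi) inversions_rev_conj // => k hk.
by rewrite (perm_natE _ hk).
Qed.

(* omega(pi_p), read through the faithful NDPF model of M_N. *)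
Definition profile (p : 'S_N) :=
  ([ffun x : 'I_N => sufmin N (perm_nat p) x],
   [ffun x : 'I_N => sufmin N (rev_conj N (perm_nat p)) x]).

Lemma eq_profile p q : profile p = profile q <->
  (forall x, x < N -> sufmin N (perm_nat p) x = sufmin N (perm_nat q) x) /\
  (forall x, x < N -> sufmin N (rev_conj N (perm_nat p)) x =
                      sufmin N (rev_conj N (perm_nat q)) x).
Proof.
split=> [[/ffunP e1 /ffunP e2]|[e1 e2]].
- by split=> x hx; [have := e1 (Ordinal hx) | have := e2 (Ordinal hx)]; rewrite !ffunE.
- by congr pair; apply/ffunP => x; rewrite !ffunE; [apply: e1 | apply: e2].
Qed.

Lemma omega_eq_profile p q : omega_eq p q <-> profile p = profile q.
Proof.
rewrite eq_profile; split=> [pq | [e1 e2] wp wq hp hq].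
- have [wp hp] := exists_reduced_word p; have [wq hq] := exists_reduced_word q.
  have [/ndpf_MN_eq e1 /ndpf_MN_eq e2] := pq wp wq hp hq.
  split=> x hx.
  + by rewrite -(ndpf_reduced_word hp hx) -(ndpf_reduced_word hq hx) e1.
  + by rewrite -(ndpf_Psi_reduced_word hp hx) -(ndpf_Psi_reduced_word hq hx) e2.
- have [[vp _ _] [vq _ _]] := (hp, hq).
  split; apply: MN_eq_ndpf; rewrite ?valid_Psi_word // => x hx.
  + by rewrite (ndpf_reduced_word hp hx) (ndpf_reduced_word hq hx) e1.
  + by rewrite (ndpf_Psi_reduced_word hp hx) (ndpf_Psi_reduced_word hq hx) e2.
Qed.

End Omega.

Section Existence.

Variable N : nat.

Lemma sufmin_swap f g b c d x : b < c < d -> d < N -> f d < f c < f b ->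
  g b = f c -> g c = f b -> (forall k, k < N -> k != b -> k != c -> g k = f k) ->
  x < N -> sufmin N g x = sufmin N f x.
Proof.
move=> bcd dN fdcb gb gc gk hx.
have [k0 hk0 min0] := sufmin_attained f hx.
have low k : x <= k < N -> f k0 <= f k by move=> hk; rewrite -min0 sufmin_le.
have k0b : k0 != b by apply/eqP => e; subst k0; have := low c ltac:(lia); lia.
have k0c : k0 != c by apply/eqP => e; subst k0; have := low d ltac:(lia); lia.
have gk0 : g k0 = f k0 by apply: gk; lia.
rewrite min0 -gk0; apply: sufmin_char => // k hk; rewrite gk0.
case: (eqVneq k b) hk => [->|kb] hk; first by rewrite gb; have := low c ltac:(lia).
case: (eqVneq k c) hk => [->|kc] hk; first by rewrite gc; have := low c ltac:(lia); lia.
by rewrite gk //; [apply: low | lia].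
Qed.

Lemma perm_nat_tperm (p : 'S_N) (b c : 'I_N) x : x < N ->
  perm_nat (tperm b c * p)%g x =
  if x == b then perm_nat p c else if x == c then perm_nat p b else perm_nat p x.
Proof.
move=> hx; rewrite !(perm_natE _ hx) !perm_nat_ord permM.
have -> : (x == b) = (Ordinal hx == b) by []; have -> : (x == c) = (Ordinal hx == c) by [].
case: tpermP => [->|->|/eqP/negbTE-> /eqP/negbTE-> //]; rewrite eqxx //.
by case: eqP => [->|].
Qed.

Lemma profile_tperm (p : 'S_N) (a b c d : 'I_N) : a < b < c -> c < d ->
  p d < p c < p b -> p b < p a -> profile (tperm b c * p)%g = profile p.
Proof.
move=> abc cd dcb ba; move: (ltn_ord a) (ltn_ord b) (ltn_ord c) (ltn_ord d) => aN bN cN dN.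
have bc : b != c :> nat by lia.
have g_b : perm_nat (tperm b c * p)%g b = perm_nat p c by rewrite !perm_nat_ord permM tpermL.
have g_c : perm_nat (tperm b c * p)%g c = perm_nat p b by rewrite !perm_nat_ord permM tpermR.
have g_k k : k < N -> k != b -> k != c -> perm_nat (tperm b c * p)%g k = perm_nat p k.
  by move=> hk /negbTE kb /negbTE kc; rewrite perm_nat_tperm // kb kc.
apply/eq_profile; split=> x hx.
- by apply: (sufmin_swap (b := b) (c := c) (d := d)) => //; rewrite ?perm_nat_ord; lia.
- apply: (sufmin_swap (b := N.-1 - c) (c := N.-1 - b) (d := N.-1 - a)) => //; try lia.
  + by rewrite !rev_conj_rev // !perm_nat_ord; move: (ltn_ord (p a)); lia.
  + by rewrite !rev_conj_rev // g_c.
  + by rewrite !rev_conj_rev // g_b.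
  + by move=> k hk kc kb; rewrite /rev_conj g_k //; lia.
Qed.

Definition weight (p : 'S_N) : nat := \sum_(k < N) k * p k.

Lemma weight_tperm (p : 'S_N) (b c : 'I_N) : b < c -> p c < p b ->
  weight p < weight (tperm b c * p)%g.
Proof.
move=> bc cb; have cb' : c != b by apply/eqP => e; rewrite e ltnn in bc.
rewrite /weight (bigD1 b) // (bigD1 c) //= [in X in _ < X](bigD1 b) //.
rewrite [in X in _ < X](bigD1 c) //= !permM tpermL tpermR.
rewrite [in X in _ < X](eq_bigr (fun k : 'I_N => k * p k)) => [|k /andP [kb kc]];
  last by rewrite permM tpermD // eq_sym.
by move: (ltn_ord b) (ltn_ord c); nia.
Qed.

Lemma exists_avoids4321_profile (w : 'S_N) : exists2 u, avoids4321 u & profile u = profile w.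
Proof.
case: (@arg_maxnP _ w (fun u => profile u == profile w) weight) => // u /eqP pu umax.
exists u => //; apply/forallP => a; apply/forallP => b; apply/forallP => c; apply/forallP => d.
apply/negP => /and5P [ab bc cd ba /andP [cb dc]].
have /umax : profile (tperm b c * u)%g == profile w.
  by rewrite (profile_tperm (a := a) (d := d)) ?ab ?bc ?cd ?ba ?cb ?dc ?pu.
by have := weight_tperm bc cb; lia.
Qed.

End Existence.

Section Uniqueness.

Variable N : nat.

Lemma rev_conj_inverses f h : inverses_on N f h -> inverses_on N (rev_conj N f) (rev_conj N h).
Proof.
case=> fN hN hf fh; split=> x hx; rewrite /rev_conj; try lia.
- have := fN (N.-1 - x) ltac:(lia) => ?.
  by rewrite (_ : N.-1 - (N.-1 - _) = f (N.-1 - x)) ?hf; lia.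
- have := hN (N.-1 - x) ltac:(lia) => ?.
  by rewrite (_ : N.-1 - (N.-1 - _) = h (N.-1 - x)) ?fh; lia.
Qed.

Lemma sufmin_attained_later f k : k < N -> f k != sufmin N f k ->
  exists2 d, k < d < N & sufmin N f k = f d.
Proof.
move=> hk not_min; have [d hd min_d] := sufmin_attained f hk.
exists d => //; case: (eqVneq d k) => [dk|]; last lia.
by move: not_min; rewrite min_d dk eqxx.
Qed.

Lemma is_sufmin f h k : inverses_on N f h -> k < N ->
  (f k == sufmin N f k) = (k == N.-1) || (sufmin N f k < sufmin N f k.+1).
Proof.
move=> fh hk.
case: (eqVneq (f k) (sufmin N f k)) => [is_min|/(sufmin_attained_later hk) [d hd min_d]].
  case: (eqVneq k N.-1) => //= kN; have k1N : k.+1 < N by lia.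
  have [k1 hk1 min1] := sufmin_attained f k1N.
  have : f k1 != f k by apply/eqP => /(inverses_on_inj fh); lia.
  by rewrite -is_min min1; have := sufmin_le f (_ : k <= k1 < N); rewrite -is_min; lia.
have := sufmin_le f (_ : k.+1 <= d < N); rewrite -min_d; lia.
Qed.

Definition avoids4321_fun (f : nat -> nat) :=
  forall a b c d, a < b < c -> c < d < N -> ~ [/\ f b < f a, f c < f b & f d < f c].

Lemma avoids4321_perm_nat (p : 'S_N) : avoids4321 p -> avoids4321_fun (perm_nat p).
Proof.
move=> /forallP av a b c d abc cdN [ba cb dc].
have [aN bN cN] : [/\ a < N, b < N & c < N] by split; lia.
have /forallP/(_ (Ordinal bN))/forallP/(_ (Ordinal cN))/forallP := av (Ordinal aN).
have dN : d < N by lia.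
move/(_ (Ordinal dN)); rewrite -!(perm_natE p) /=.
have [-> -> ->] : [/\ a < b, b < c & c < d] by split; lia.
by rewrite ba cb dc.
Qed.

(* Outside the right-to-left minima and the left-to-right maxima (the latter
   are the right-to-left minima of [rev_conj f], read backwards), a
   4321-avoiding permutation is increasing. *)
Lemma avoids4321_increasing f h k1 k2 : inverses_on N f h -> avoids4321_fun f ->
  k1 < k2 < N -> rev_conj N f (N.-1 - k1) != sufmin N (rev_conj N f) (N.-1 - k1) ->
  f k2 != sufmin N f k2 -> f k1 < f k2.
Proof.
move=> fh av k12 not_max not_min; have [fN _ _ _] := fh.
have [k1N k2N] : N.-1 - k1 < N /\ k2 < N by lia.
have [d hd min_d] := sufmin_attained_later k2N not_min.
have fdk2 : f d < f k2.
  by rewrite -min_d ltn_neqAle eq_sym not_min sufmin_le //; lia.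
have [e he max_e] := sufmin_attained_later k1N not_max.
have fk1e : f k1 < f (N.-1 - e).
  have : sufmin N (rev_conj N f) (N.-1 - k1) < rev_conj N f (N.-1 - k1).
    by rewrite ltn_neqAle eq_sym not_max sufmin_le //; lia.
  rewrite max_e rev_conj_rev ?/rev_conj; last lia.
  by have := fN k1 ltac:(lia); have := fN (N.-1 - e) ltac:(lia); lia.
rewrite ltnNge leq_eqVlt negb_or; apply/andP; split.
  by apply/eqP => /(inverses_on_inj fh); lia.
by apply/negP => fk21; apply: (av (N.-1 - e) k1 k2 d); [lia | lia | split; lia].
Qed.

Section AgreeOffIncreasing.

Variables (F Fi G Gi : nat -> nat) (M : pred nat).
Hypotheses (FFi : inverses_on N F Fi) (GGi : inverses_on N G Gi).
Hypothesis agree : forall j, j < N -> ~~ M j -> F j = G j.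

Lemma agree_prefix_leq k :
  (forall j1 j2, j1 < j2 < N -> M j1 -> M j2 -> G j1 < G j2) ->
  (forall j, j < k -> F j = G j) -> k < N -> G k <= F k.
Proof.
move=> incG prefix kN; rewrite leqNgt; apply/negP => FkGk.
have [FN _ _ _] := FFi; have [_ GiN _ GGiK] := GGi.
set k2 := Gi (F k); have k2N : k2 < N by apply/GiN/FN.
have Gk2 : G k2 = F k by apply/GGiK/FN.
have Mk : M k by apply/negPn/negP => /(agree kN); lia.
have F_G_k2 : F k2 != G k2.
  apply/eqP => FGk2; have k2k : k2 = k by apply: (inverses_on_inj FFi); rewrite // FGk2.
  by move: Gk2; rewrite k2k; lia.
have Mk2 : M k2 by apply/negPn/negP => /(agree k2N)/eqP; rewrite (negbTE F_G_k2).
case: (ltngtP k k2) => [kk2|k2k|k2k]; last by move: Gk2; rewrite -k2k; lia.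
- by have := incG k k2 ltac:(lia) Mk Mk2; lia.
- by move: F_G_k2; rewrite prefix ?eqxx.
Qed.

End AgreeOffIncreasing.

(* Two permutations agreeing off M and both increasing on M are equal: the
   values they take on M form the same set. *)
Lemma eq_on_of_increasing F Fi G Gi (M : pred nat) :
  inverses_on N F Fi -> inverses_on N G Gi -> (forall j, j < N -> ~~ M j -> F j = G j) ->
  (forall j1 j2, j1 < j2 < N -> M j1 -> M j2 -> F j1 < F j2) ->
  (forall j1 j2, j1 < j2 < N -> M j1 -> M j2 -> G j1 < G j2) ->
  forall x, x < N -> F x = G x.
Proof.
move=> FFi GGi agree incF incG; elim/ltn_ind=> k IH kN; apply/eqP; rewrite eqn_leq.
have agree' j : j < N -> ~~ M j -> G j = F j by move=> jN /(agree _ jN).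
by rewrite (agree_prefix_leq GGi FFi agree') ?(agree_prefix_leq FFi GGi agree) // => j jk;
  rewrite IH //; lia.
Qed.

Lemma avoids4321_profile_inj (u v : 'S_N) :
  avoids4321 u -> avoids4321 v -> profile u = profile v -> u = v.
Proof.
move=> avu avv /eq_profile [e1 e2].
have uu := perm_nat_inverses u; have vv := perm_nat_inverses v.
set F := perm_nat u in e1 e2 uu *; set G := perm_nat v in e1 e2 vv *.
pose middle (f : nat -> nat) k :=
  (f k != sufmin N f k) && (rev_conj N f (N.-1 - k) != sufmin N (rev_conj N f) (N.-1 - k)).
have same_min k : k < N -> (F k == sufmin N F k) = (G k == sufmin N G k).
  move=> kN; rewrite (is_sufmin uu) // (is_sufmin vv) //.
  by case: (eqVneq k N.-1) => //= kN1; rewrite !e1 //; lia.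
have same_max k : k < N -> (rev_conj N F k == sufmin N (rev_conj N F) k) =
                           (rev_conj N G k == sufmin N (rev_conj N G) k).
  move=> kN; rewrite (is_sufmin (rev_conj_inverses uu)) // (is_sufmin (rev_conj_inverses vv)) //.
  by case: (eqVneq k N.-1) => //= kN1; rewrite !e2 //; lia.
have same_middle k : k < N -> middle F k = middle G k.
  by move=> kN; rewrite /middle same_min ?same_max //; lia.
apply/permP => i; apply/val_inj; rewrite /= -!perm_nat_ord.
apply: (eq_on_of_increasing (M := middle F) uu vv) => // [j jN||].
- rewrite negb_and !negbK => /orP [/eqP minF|/eqP maxF].
  + have /eqP minG : G j == sufmin N G j by rewrite -same_min // minF eqxx.
    by rewrite minF minG e1.
  + have /eqP maxG : rev_conj N G (N.-1 - j) == sufmin N (rev_conj N G) (N.-1 - j).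
      by rewrite -same_max ?maxF ?eqxx //; lia.
    move: maxF; rewrite e2 -?maxG; last lia.
    have [[FN _ _ _] [GN _ _ _]] := (uu, vv).
    by rewrite !rev_conj_rev //; have := FN j jN; have := GN j jN; lia.
- move=> j1 j2 j12 /andP [_ not_max] /andP [not_min _].
  exact: (avoids4321_increasing uu (avoids4321_perm_nat avu)).
- move=> j1 j2 j12; rewrite !same_middle; try lia.
  move=> /andP [_ not_max] /andP [not_min _].
  exact: (avoids4321_increasing vv (avoids4321_perm_nat avv)).
Qed.

End Uniqueness.

Theorem mainTheorem3 (N : nat) (hN : 1 <= N) (w : 'S_N) :
  exists u : 'S_N,
    (avoids4321 u /\ omega_eq w u) /\
    (forall v : 'S_N, avoids4321 v -> omega_eq w v -> v = u).
Proof.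
have [u avu wu] := exists_avoids4321_profile w.
exists u; split; first by split=> //; apply/omega_eq_profile.
move=> v avv /omega_eq_profile wv.
by apply: avoids4321_profile_inj; rewrite // -wv.
Qed.
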